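(* Fix an integer $r\ge 1$. Let $A=(a_{ij})$ be a real symmetric $n\times n$ matrix with $n\ge r$, with eigenvalues $\lambda_1\ge \lambda_2\ge\cdots\ge\lambda_n$, such that $0\le a_{ij}\le 1$ for all $i\neq j$ and $a_{ii}\ge 0$ for all $1\le i\le n$. Then \[ \lambda_{n-r+1}+\lambda_{n-r+2}+\cdots+\lambda_n\ \ge\ -\frac{\beta_r}{2}\,n . \]
   Context: For integers $N\ge r\ge 1$, let $\mathcal P_r(N)=\{Q\in\mathbb R^{N\times N}: Q^2=Q,\ Q^T=Q,\ \operatorname{rank}Q=r\}$ be the set of rank-$r$ orthogonal projections. Define \[ \beta_r(N)=\frac1N\max_{Q\in\mathcal P_r(N)}\sum_{i,j=1}^N |q_{ij}|,\qquad \beta_r=\sup_{N\ge r}\beta_r(N), \] where $Q=(q_{ij})$. *)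

From HB Require Import structures.
From mathcomp Require Import all_boot all_order all_algebra.
From mathcomp Require Import all_classical all_reals.
Set Implicit Arguments. Unset Strict Implicit. Unset Printing Implicit Defensive.
Import Order.TTheory GRing.Theory Num.Theory.
Local Open Scope ring_scope.
Local Open Scope classical_set_scope.

Definition is_proj_rank (R : realType) (N r : nat) (Q : 'M[R]_N) : Prop :=
  Q *m Q = Q /\ Q^T = Q /\ \rank Q = r.

Definition entry_l1 (R : realType) (N : nat) (Q : 'M[R]_N) : R :=
  \sum_(i < N) \sum_(j < N) `|Q i j|.

(* beta_r(N) = (1/N) max_{Q in P_r(N)} sum |q_ij|  (the max is attained, so
   it equals the supremum). *)
Definition beta_rN (R : realType) (r N : nat) : R :=
  sup [set (N%:R)^-1 * entry_l1 Q | Q in [set Q : 'M[R]_N | is_proj_rank r Q]].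

Definition beta_r (R : realType) (r : nat) : R :=
  sup [set beta_rN R r N | N in [set N : nat | (r <= N)%N]].

Definition sorted_eigenvalues (R : realType) (n : nat) (A : 'M[R]_n)
  (lam : 'I_n -> R) : Prop :=
  char_poly A = \prod_(i < n) ('X - (lam i)%:P) /\
  (forall i j : 'I_n, (i <= j)%N -> lam j <= lam i).

From mathcomp Require Import all_boot all_order all_algebra.
From mathcomp Require Import all_classical all_reals.
From mathcomp Require Import complex.
From mathcomp Require Import lra.
Set Implicit Arguments. Unset Strict Implicit. Unset Printing Implicit Defensive.
Import Order.TTheory GRing.Theory Num.Theory.
Local Open Scope ring_scope.

(* Let mu be the r-th smallest eigenvalue of A.  Polynomials in A interpolating
   indicator functions on the spectrum are the orthogonal projections onto the
   eigenvalues below mu and equal to mu; adding to the first one the projection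
   onto a suitable subspace of the mu-eigenspace yields a rank-r orthogonal
   projection P with tr(AP) = lam_(n-r+1) + ... + lam_n.  Now
   tr(AP) = sum_ij a_ij p_ij, and as 0 <= a_ij <= 1 off the diagonal while
   a_ii, p_ii >= 0, each term is at least (p_ij - |p_ij|)/2.  Since
   sum_ij p_ij = |P 1|^2 >= 0, this gives tr(AP) >= -(sum_ij |p_ij|)/2, which is
   at least -beta_r n / 2 by definition of beta_r. *)

Lemma mxtrace_pid_mx (F : fieldType) n k :
  (k <= n)%N -> \tr (pid_mx k : 'M[F]_n) = k%:R.
Proof.
move=> le_kn; rewrite /mxtrace.
rewrite (eq_bigr (fun i : 'I_n => if (i < k)%N then 1 else 0)) => [|i _]; last first.
  by rewrite mxE eqxx; case: ifP.
by rewrite -big_mkcond -(big_ord_widen n (fun _ => 1 : F) le_kn) sumr_const card_ord.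
Qed.

Lemma mxtrace_idem (F : fieldType) n (P : 'M[F]_n) :
  P *m P = P -> \tr P = (\rank P)%:R.
Proof.
move=> PP; have EP := mulmx_ebase P.
set L := col_ebase P in EP *; set U := row_ebase P in EP *.
have Lu : L \in unitmx := col_ebase_unit P.
have Uu : U \in unitmx := row_ebase_unit P.
have le_rn : (\rank P <= n)%N := rank_leq_col P.
set k := \rank P in EP le_rn *.
(* Idempotence of [P = L D U] with [D = pid_mx k] gives [D (U L) D = D]. *)
have DULD : pid_mx k *m (U *m L) *m pid_mx k = pid_mx k :> 'M_n.
  have : L *m (pid_mx k *m (U *m L) *m pid_mx k) *m U = L *m pid_mx k *m U
    by rewrite EP -{1}PP -EP !mulmxA.
  move=> /(congr1 (mulmx^~ (invmx U))); rewrite !mulmxK //.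
  by move=> /(congr1 (mulmx (invmx L))); rewrite !mulKmx.
rewrite -EP -mulmxA mxtrace_mulC -mulmxA -{1}(pid_mx_id _ _ _ le_rn) -mulmxA.
by rewrite mxtrace_mulC DULD mxtrace_pid_mx.
Qed.

Lemma mulmx_trmx_self_eq0 (R : realDomainType) m n (Y : 'M[R]_(m, n)) :
  Y *m Y^T = 0 -> Y = 0.
Proof.
move=> /matrixP YYT; apply/matrixP => i j; rewrite mxE.
have /eqP := YYT i i; rewrite !mxE psumr_eq0 => [/allP/(_ j (mem_index_enum _))|k _].
  by rewrite mxE -expr2 sqrf_eq0 => /eqP.
by rewrite mxE -expr2 sqr_ge0.
Qed.

Lemma row_free_gram_unit (R : realFieldType) m n (B : 'M[R]_(m, n)) :
  row_free B -> B *m B^T \in unitmx.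
Proof.
move=> Bfree; rewrite -row_free_unit -kermx_eq0.
set K := kermx _; have KBBT : K *m (B *m B^T) = 0 := mulmx_ker _.
have KB : K *m B = 0.
  by apply: mulmx_trmx_self_eq0; rewrite trmx_mul mulmxA -(mulmxA K) KBBT mul0mx.
by rewrite -(mulmx_free_eq0 _ Bfree) KB.
Qed.

Definition row_proj (R : realFieldType) m n (B : 'M[R]_(m, n)) : 'M[R]_n :=
  B^T *m invmx (B *m B^T) *m B.

Section RowProj.
Variables (R : realFieldType) (m n : nat) (B : 'M[R]_(m, n)).

Lemma row_projT : (row_proj B)^T = row_proj B.
Proof. by rewrite !trmx_mul trmxK trmx_inv trmx_mul trmxK mulmxA. Qed.

Lemma mulmx_row_proj_eq0 p (M : 'M[R]_(p, n)) : M *m B^T = 0 -> M *m row_proj B = 0.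
Proof. by rewrite /row_proj !mulmxA => ->; rewrite !mul0mx. Qed.

Lemma row_proj_mulmx_eq0 p (M : 'M[R]_(n, p)) : B *m M = 0 -> row_proj B *m M = 0.
Proof. by rewrite /row_proj -mulmxA => ->; rewrite mulmx0. Qed.

Hypothesis Bfree : row_free B.

Lemma row_proj_idem : row_proj B *m row_proj B = row_proj B.
Proof.
rewrite /row_proj !mulmxA -(mulmxA _ B B^T) -(mulmxA _ (B *m B^T)).
by rewrite mulmxV ?row_free_gram_unit // mulmx1.
Qed.

Lemma mxtrace_row_proj : \tr (row_proj B) = m%:R.
Proof. by rewrite mxtrace_mulC mulmxA mulmxV ?row_free_gram_unit // mxtrace1. Qed.

Lemma mxtrace_mul_row_proj_eigen (A : 'M[R]_n) (mu : R) :
  B *m A = mu *: B -> \tr (A *m row_proj B) = mu * m%:R.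
Proof.
move=> BA; rewrite mxtrace_mulC -mulmxA BA -scalemxAr -/(row_proj B).
by rewrite mxtraceZ mxtrace_row_proj.
Qed.

End RowProj.

Lemma is_proj_rank_add (R : realType) n k l (P Q : 'M[R]_n) :
  is_proj_rank k P -> is_proj_rank l Q -> P *m Q = 0 -> Q *m P = 0 ->
  is_proj_rank (k + l) (P + Q).
Proof.
move=> [PP [PT <-]] [QQ [QT <-]] PQ QP.
have PQPQ : (P + Q) *m (P + Q) = P + Q.
  by rewrite mulmxDr !mulmxDl PP QQ PQ QP addr0 add0r.
split=> //; split; first by rewrite linearD /= PT QT.
apply/eqP; rewrite -(eqr_nat R) -mxtrace_idem // mxtraceD.
by rewrite (mxtrace_idem PP) (mxtrace_idem QQ) natrD.
Qed.

Lemma row_proj_is_proj (R : realType) m n (B : 'M[R]_(m, n)) :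
  row_free B -> is_proj_rank m (row_proj B).
Proof.
move=> Bfree; split; first exact: row_proj_idem.
split; first exact: row_projT.
apply/eqP; rewrite -(eqr_nat R) -mxtrace_idem ?row_proj_idem //.
by rewrite mxtrace_row_proj.
Qed.

Lemma sum_entries_sym_idem_ge0 (R : realFieldType) n (P : 'M[R]_n) :
  P^T = P -> P *m P = P -> 0 <= \sum_i \sum_j P i j.
Proof.
move=> PT PP; have sym i j : P j i = P i j by rewrite -{1}PT mxE.
(* [1^T P 1 = 1^T P^T P 1] is the squared norm of [P 1]. *)
suff -> : \sum_i \sum_j P i j = \sum_k (\sum_i P k i) ^+ 2.
  by apply: sumr_ge0 => k _; exact: sqr_ge0.
transitivity (\sum_i \sum_j \sum_k P i k * P k j).
  by apply: eq_bigr => i _; apply: eq_bigr => j _; rewrite -{1}PP mxE.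
rewrite (eq_bigr _ (fun i _ => exchange_big _ _ _ _ _ _)) exchange_big /=.
apply: eq_bigr => k _; rewrite expr2 mulr_suml; apply: eq_bigr => i _.
by rewrite mulr_sumr sym.
Qed.

Lemma mxtrace_mul_sym_idem_ge (R : realFieldType) n (A P : 'M[R]_n) :
  (forall i j : 'I_n, i != j -> 0 <= A i j <= 1) -> (forall i, 0 <= A i i) ->
  P^T = P -> P *m P = P ->
  - (\sum_i \sum_j `|P i j|) / 2 <= \tr (A *m P).
Proof.
move=> Aoff Adiag PT PP; have sym i j : P j i = P i j by rewrite -{1}PT mxE.
have Pdiag i : 0 <= P i i.
  by rewrite -PP mxE; apply: sumr_ge0 => k _; rewrite sym -expr2 sqr_ge0.
have entry i j : (P i j - `|P i j|) / 2 <= A i j * P i j.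
  have [<-|/Aoff/andP[A0 A1]] := eqVneq i j.
    by rewrite ger0_norm // subrr mul0r mulr_ge0.
  have [P0|P0] := lerP 0 (P i j); first by rewrite ger0_norm // subrr mul0r mulr_ge0.
  rewrite ltr0_norm //; nra.
have -> : \tr (A *m P) = \sum_i \sum_j A i j * P i j.
  by apply: eq_bigr => i _; rewrite mxE; apply: eq_bigr => j _; rewrite sym.
apply: le_trans (ler_sum _ (fun i _ => ler_sum _ (fun j _ => entry i j))).
have -> : \sum_i \sum_j (P i j - `|P i j|) / 2
          = ((\sum_i \sum_j P i j) - \sum_i \sum_j `|P i j|) / 2.
  by rewrite -sumrB mulr_suml; apply: eq_bigr => i _; rewrite -sumrB mulr_suml.
have := sum_entries_sym_idem_ge0 PT PP; lra.
Qed.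

Lemma sum_sqr_entries_sym_idem (R : realFieldType) n (P : 'M[R]_n) :
  P^T = P -> P *m P = P -> \sum_i \sum_j P i j ^+ 2 = (\rank P)%:R.
Proof.
move=> PT PP; have sym i j : P j i = P i j by rewrite -{1}PT mxE.
rewrite -mxtrace_idem // /mxtrace; apply: eq_bigr => i _.
by rewrite -{2}PP mxE; apply: eq_bigr => j _; rewrite sym expr2.
Qed.

(* This bound makes the suprema defining beta_r genuine upper bounds.  It sums
   AM-GM [2 N |q| <= N^2 q^2 + 1] over the N^2 entries of Q. *)
Lemma entry_l1_proj_le (R : realType) r N (Q : 'M[R]_N) :
  is_proj_rank r Q -> N%:R^-1 * entry_l1 Q <= (r%:R + 1) / 2.
Proof.
case: N Q => [|N] Q [QQ [QT rkQ]].
  by rewrite invr0 mul0r divr_ge0 ?addr_ge0.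
set M : R := N.+1%:R; have M0 : 0 < M by rewrite ltr0n.
have amgm (x : R) : 2 * M * `|x| <= M ^+ 2 * x ^+ 2 + 1.
  have := sqr_ge0 (M * `|x| - 1); rewrite -[x ^+ 2]real_normK ?num_real //; nra.
have lhs : \sum_i \sum_j 2 * M * `|Q i j| = 2 * M * entry_l1 Q.
  by rewrite /entry_l1 mulr_sumr; apply: eq_bigr => i _; rewrite mulr_sumr.
have rhs : \sum_i \sum_j (M ^+ 2 * Q i j ^+ 2 + 1) = M ^+ 2 * r%:R + M ^+ 2.
  rewrite -rkQ -sum_sqr_entries_sym_idem // mulr_sumr.
  transitivity (\sum_(i < N.+1) (M ^+ 2 * \sum_j Q i j ^+ 2 + M)).
    by apply: eq_bigr => i _; rewrite big_split /= -mulr_sumr sumr_const card_ord.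
  by rewrite big_split /= sumr_const card_ord -mulr_natr expr2.
have : \sum_i \sum_j 2 * M * `|Q i j| <= \sum_i \sum_j (M ^+ 2 * Q i j ^+ 2 + 1).
  by apply: ler_sum => i _; apply: ler_sum => j _; exact: amgm.
rewrite lhs rhs ler_pdivrMl //; nra.
Qed.

Local Open Scope classical_set_scope.

Lemma beta_rN_le (R : realType) r N : beta_rN R r N <= (r%:R + 1) / 2.
Proof.
have r0 : 0 <= (r%:R + 1) / 2 :> R by rewrite divr_ge0 ?addr_ge0.
rewrite /beta_rN; set S := [set _ | _ in _].
have [ne|S0] := pselect (S !=set0); last by rewrite sup_out // => -[].
by apply: ge_sup => // _ [Q /entry_l1_proj_le + <-].
Qed.

Lemma entry_l1_proj_le_beta_r (R : realType) r N (Q : 'M[R]_N) :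
  (r <= N)%N -> is_proj_rank r Q -> N%:R^-1 * entry_l1 Q <= beta_r R r.
Proof.
move=> le_rN Qproj; apply: (@le_trans _ _ (beta_rN R r N)).
  apply: sup_upper_bound; last by exists Q.
  split; first by exists (N%:R^-1 * entry_l1 Q), Q.
  by exists ((r%:R + 1) / 2) => _ [Q' /entry_l1_proj_le + <-].
apply: sup_upper_bound; last by exists N.
split; first by exists (beta_rN R r N), N.
by exists ((r%:R + 1) / 2) => _ [N' _ <-]; exact: beta_rN_le.
Qed.

Local Close Scope classical_set_scope.

Lemma exists_interp_poly (F : fieldType) (s : seq F) (f : F -> F) :
  exists g : {poly F}, {in s, forall x, g.[x] = f x}.
Proof.
elim: s => [|y s [g gf]]; first by exists 0.
have [ys|yNs] := boolP (y \in s).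
  by exists g => x; rewrite inE => /predU1P[->|]; apply: gf.
pose w := \prod_(z <- s) ('X - z%:P).
have wy : w.[y] != 0 by rewrite -rootE root_prod_XsubC.
exists (g + ((f y - g.[y]) / w.[y]) *: w) => x; rewrite inE hornerD hornerZ.
case/predU1P=> [->|xs]; first by rewrite divfK // addrC subrK.
have /rootP-> : root w x by rewrite root_prod_XsubC.
by rewrite mulr0 addr0 gf.
Qed.

Lemma char_poly_uconj (R : comUnitRingType) n (V D : 'M[R]_n) :
  V \in unitmx -> char_poly (invmx V *m D *m V) = char_poly D.
Proof.
move=> Vu; set Vp := map_mx polyC V; set Wp := map_mx polyC (invmx V).
have WV : Wp *m Vp = 1%:M by rewrite -map_mxM mulVmx // map_mx1.
have VW : Vp *m Wp = 1%:M by rewrite -map_mxM mulmxV // map_mx1.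
rewrite /char_poly.
have -> : char_poly_mx (invmx V *m D *m V) = Wp *m char_poly_mx D *m Vp.
  rewrite /char_poly_mx mulmxBr mulmxBl !map_mxM; congr (_ - _).
  by rewrite mul_mx_scalar -scalemxAl WV scalemx1.
by rewrite !det_mulmx mulrC mulrA -det_mulmx VW det1 mul1r.
Qed.

Lemma trmx_horner_mx (R : comNzRingType) n (A : 'M[R]_n.+1) (p : {poly R}) :
  A^T = A -> (horner_mx A p)^T = horner_mx A p.
Proof.
move=> AT; elim/poly_ind: p => [|p c IHp]; first by rewrite rmorph0 trmx0.
rewrite rmorphD rmorphM /= horner_mx_X horner_mx_C linearD /= tr_scalar_mx.
rewrite -mulmxE trmx_mul IHp AT.
by congr (_ + _); apply: comm_mx_horner; exact: comm_mx_refl.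
Qed.

Lemma sym_mx_complex_diag (R : realType) n (A : 'M[R]_n.+1) : A^T = A ->
  exists2 V : 'M[R[i]]_n.+1, V \in unitmx & exists e : 'I_n.+1 -> R,
    map_mx (real_complex R) A = invmx V *m diag_mx (\row_i real_complex R (e i)) *m V.
Proof.
move=> AT; set A' := map_mx _ A.
have A'herm : A' \is hermsymmx.
  apply/is_hermitianmxP; rewrite expr0 scale1r; apply/matrixP => i j.
  by rewrite !mxE -[in LHS]AT mxE conj_Creal //; apply/complex_realP; exists (A j i).
have /orthomx_spectralP EA := hermitian_normalmx A'herm.
have /mxOverP dreal := hermitian_spectral_diag_real A'herm.
exists (spectralmx A'); first exact: spectral_unit.
exists (fun i => complex.Re (spectral_diag A' 0 i)); rewrite {1}EA.
by congr (_ *m diag_mx _ *m _); apply/rowP => i; rewrite mxE RRe_real.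
Qed.

Section SymFunctionalCalculus.
Variables (R : realType) (n : nat) (A : 'M[R]_n.+1) (lam : 'I_n.+1 -> R).
Hypotheses (AT : A^T = A) (charA : char_poly A = \prod_i ('X - (lam i)%:P)).

Local Notation toC := (real_complex R).

Lemma sym_mx_horner_diag : exists2 V : 'M[R[i]]_n.+1, V \in unitmx &
  exists2 e : 'I_n.+1 -> R,
    perm_eq [seq lam i | i <- index_enum 'I_n.+1] [seq e i | i <- index_enum 'I_n.+1] &
    forall p, map_mx toC (horner_mx A p) = invmx V *m diag_mx (\row_i toC p.[e i]) *m V.
Proof.
have [V Vu [e EA]] := sym_mx_complex_diag AT.
have hornerE p : map_mx toC (horner_mx A p) = invmx V *m diag_mx (\row_i toC p.[e i]) *m V.
  rewrite map_horner_mx EA -{2}[V]invmxK horner_mx_uconj ?unitmx_inv // invmxK.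
  rewrite horner_mx_diag; congr (_ *m diag_mx _ *m _).
  by apply/rowP => i; rewrite !mxE horner_map.
exists V => //; exists e => //; apply: prod_XsubC_eq; rewrite !big_map.
apply: (@map_poly_inj _ _ toC); rewrite -charA map_char_poly EA.
rewrite char_poly_uconj // char_poly_trig ?diag_mx_is_trig // rmorph_prod.
by apply: eq_bigr => i _; rewrite mxE eqxx mulr1n mxE /= map_polyXsubC.
Qed.

Lemma horner_mx_eq_spectrum (p q : {poly R}) :
  (forall i, p.[lam i] = q.[lam i]) -> horner_mx A p = horner_mx A q.
Proof.
move=> pq; have [V Vu [e lam_e hornerE]] := sym_mx_horner_diag.
apply: (@map_mx_inj _ _ toC); rewrite !hornerE; congr (_ *m diag_mx _ *m _).
apply/rowP => i; rewrite !mxE.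
have /mapP[j _ ->] : e i \in [seq lam i | i <- index_enum 'I_n.+1].
  by rewrite (perm_mem lam_e) map_f ?mem_index_enum.
by rewrite pq.
Qed.

Lemma mxtrace_horner_mx (p : {poly R}) : \tr (horner_mx A p) = \sum_i p.[lam i].
Proof.
have [V Vu [e lam_e hornerE]] := sym_mx_horner_diag.
apply: (@fmorph_inj _ _ toC); rewrite [LHS]rmorph_sum.
transitivity (\tr (map_mx toC (horner_mx A p))).
  by apply: eq_bigr => i _; rewrite mxE.
rewrite hornerE mxtrace_mulC mulmxA mulmxV // mul1mx mxtrace_diag rmorph_sum.
rewrite (eq_bigr (fun i => toC p.[e i])) => [|i _]; last by rewrite !mxE.
rewrite -(big_map e predT (fun x => toC p.[x])) -(perm_big _ lam_e).
by rewrite big_map.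
Qed.

Definition spectral_poly (b : pred R) : {poly R} :=
  sval (cid (exists_interp_poly [seq lam i | i <- index_enum 'I_n.+1]
                              (fun x => if b x then 1 else 0))).

Definition spectral_proj (b : pred R) := horner_mx A (spectral_poly b).

Lemma spectral_polyE b i : (spectral_poly b).[lam i] = if b (lam i) then 1 else 0.
Proof. by rewrite (svalP (cid (exists_interp_poly _ _))) // map_f ?mem_index_enum. Qed.

Lemma spectral_projT b : (spectral_proj b)^T = spectral_proj b.
Proof. exact: trmx_horner_mx. Qed.

Lemma spectral_proj_idem b : spectral_proj b *m spectral_proj b = spectral_proj b.
Proof.
rewrite mulmxE -rmorphM; apply: horner_mx_eq_spectrum => i.
by rewrite hornerM spectral_polyE; case: (b _); rewrite ?mulr1 ?mulr0.
Qed.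

Lemma spectral_proj_orth (b c : pred R) :
  (forall x, b x -> ~~ c x) -> spectral_proj b *m spectral_proj c = 0.
Proof.
move=> bc; rewrite mulmxE -rmorphM -(rmorph0 (horner_mx A)).
apply: horner_mx_eq_spectrum => i; rewrite hornerM horner0 !spectral_polyE.
by case: (boolP (b _)) => [/bc/negbTE->|_]; rewrite ?mulr0 ?mul0r.
Qed.

Lemma spectral_proj_eigen mu :
  spectral_proj (pred1 mu) *m A = mu *: spectral_proj (pred1 mu).
Proof.
have -> : spectral_proj (pred1 mu) *m A = horner_mx A (spectral_poly (pred1 mu) * 'X).
  by rewrite rmorphM /= horner_mx_X.
have -> : mu *: spectral_proj (pred1 mu) = horner_mx A (mu%:P * spectral_poly (pred1 mu)).
  by rewrite rmorphM /= horner_mx_C -mulmxE mul_scalar_mx.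
apply: horner_mx_eq_spectrum => i; rewrite !hornerM hornerX hornerC spectral_polyE /=.
by case: eqP => [->|_]; rewrite ?mulr0 ?mul0r ?mulr1 ?mul1r.
Qed.

Lemma spectral_proj_is_proj b :
  is_proj_rank #|[pred i | b (lam i)]| (spectral_proj b).
Proof.
split; first exact: spectral_proj_idem.
split; first exact: spectral_projT.
apply/eqP; rewrite -(eqr_nat R); apply/eqP.
rewrite -mxtrace_idem ?spectral_proj_idem // mxtrace_horner_mx.
by under eq_bigr do rewrite spectral_polyE; rewrite -big_mkcond /= sumr_const.
Qed.

Lemma mxtrace_mul_spectral_proj b :
  \tr (A *m spectral_proj b) = \sum_(i | b (lam i)) lam i.
Proof.
have -> : A *m spectral_proj b = horner_mx A ('X * spectral_poly b).
  by rewrite rmorphM /= horner_mx_X.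
rewrite mxtrace_horner_mx [RHS]big_mkcond; apply: eq_bigr => i _.
by rewrite hornerM hornerX spectral_polyE; case: (b _); rewrite ?mulr1 ?mulr0.
Qed.

End SymFunctionalCalculus.

Section SortedTail.
Variables (R : realDomainType) (N : nat) (lam : 'I_N -> R) (j : 'I_N).
Hypothesis lam_sorted : forall i k : 'I_N, (i <= k)%N -> lam k <= lam i.

Let lt_tail i : lam i < lam j -> (j <= i)%N.
Proof. by apply: contraTT; rewrite -ltnNge -leNgt => /ltnW; exact: lam_sorted. Qed.

Let T := [pred i : 'I_N | (j <= i)%N].
Let L := [pred i : 'I_N | lam i < lam j].

Let TL i : T i && L i = L i.
Proof. by apply/andb_idl/lt_tail. Qed.

(* d counts the entries of the tail that are equal to lam j. *)
Lemma sorted_tail_split : exists d,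
  [/\ (d <= #|[pred i | lam i == lam j]|)%N,
      #|[pred i : 'I_N | (j <= i)%N]| = (#|[pred i | (lam i < lam j)%R]| + d)%N &
      \sum_(i < N | (j <= i)%N) lam i = \sum_(i < N | lam i < lam j) lam i + lam j * d%:R].
Proof.
exists #|[pred i | T i && ~~ L i]|; split.
- apply: subset_leq_card; apply/fintype.subsetP => i; rewrite !inE => /andP[Ti nLi].
  by rewrite eq_le lam_sorted //= leNgt.
- by rewrite -!sum1_card (bigID L) /= (eq_bigl _ _ TL).
- rewrite (bigID L) /= (eq_bigl _ _ TL); congr (_ + _).
  rewrite (eq_bigr (fun=> lam j)) => [|i /andP[Ti nLi]]; last first.
    by apply/eqP; rewrite eq_le lam_sorted //= leNgt.
  by rewrite sumr_const mulr_natr.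
Qed.

End SortedTail.

Lemma card_ord_tail N r : (r <= N)%N -> #|[pred i : 'I_N | (N - r <= i)%N]| = r.
Proof.
move=> le_rN; rewrite -sum1_card; transitivity (\sum_(N - r <= i < N) 1)%N.
  by rewrite big_geq_mkord; apply: eq_bigl => i; rewrite inE.
by rewrite sum_nat_const_nat muln1 subKn.
Qed.

Lemma exists_proj_mxtrace_smallest_eigenvalues (R : realType) n r
    (A : 'M[R]_n.+1) (lam : 'I_n.+1 -> R) :
  (0 < r)%N -> (r <= n.+1)%N -> A^T = A -> sorted_eigenvalues A lam ->
  exists2 P, is_proj_rank r P &
    \tr (A *m P) = \sum_(i < n.+1 | (n.+1 - r <= i)%N) lam i.
Proof.
move=> r_gt0 le_rn AT [charA lam_sorted].
have j_lt : (n.+1 - r < n.+1)%N by rewrite ltn_subrL r_gt0.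
pose j := Ordinal j_lt; set mu := lam j.
have [d [le_dm tail_card ->]] := @sorted_tail_split _ _ lam j lam_sorted.
rewrite card_ord_tail // in tail_card.
have P1proj := spectral_proj_is_proj AT charA (fun x => x < mu).
have [PePe [PeT rkPe]] := spectral_proj_is_proj AT charA (pred1 mu).
set P1 := spectral_proj A lam _ in P1proj; set Pe := spectral_proj A lam _ in PePe PeT rkPe.
have [X RPe] : exists X, row_base Pe = X *m Pe by apply/submxP; rewrite eq_row_base.
pose B : 'M_(d, n.+1) := pid_mx d *m row_base Pe.
have Bfree : row_free B.
  by rewrite /row_free mxrankMfree ?row_base_free // rank_pid_mx // rkPe.
have BA : B *m A = mu *: B.
  by rewrite /B RPe -!mulmxA spectral_proj_eigen // !scalemxAr.
have P1B : P1 *m B^T = 0.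
  rewrite /B RPe !trmx_mul PeT !mulmxA spectral_proj_orth ?mul0mx // => x.
  by rewrite /= => /lt_eqF->.
have BP1 : B *m P1 = 0.
  by case: P1proj => _ [P1T _]; rewrite -[LHS]trmxK trmx_mul P1T P1B trmx0.
exists (P1 + row_proj B).
  rewrite tail_card; apply: is_proj_rank_add => //; first exact: row_proj_is_proj.
    exact: mulmx_row_proj_eq0.
  exact: row_proj_mulmx_eq0.
rewrite mulmxDr mxtraceD mxtrace_mul_spectral_proj //.
by rewrite (mxtrace_mul_row_proj_eigen Bfree BA).
Qed.

Theorem theorem2p1 (R : realType) (r n : nat) (A : 'M[R]_n) (lam : 'I_n -> R) :
  (1 <= r)%N -> (r <= n)%N ->
  A^T = A ->
  (forall i j : 'I_n, i != j -> 0 <= A i j <= 1) ->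
  (forall i : 'I_n, 0 <= A i i) ->
  sorted_eigenvalues A lam ->
  \sum_(i < n | (n - r <= i)%N) lam i >= - (beta_r R r / 2) * n%:R.
Proof.
case: n A lam => [|n] A lam r_gt0 le_rn AT Aoff Adiag lam_sorted.
  by have := leq_trans r_gt0 le_rn.
have [P Pproj <-] := exists_proj_mxtrace_smallest_eigenvalues r_gt0 le_rn AT lam_sorted.
have [PP [PT _]] := Pproj.
have := mxtrace_mul_sym_idem_ge Aoff Adiag PT PP.
have := entry_l1_proj_le_beta_r le_rn Pproj.
rewrite /entry_l1 mulrC ler_pdivrMr ?ltr0n //; nra.
Qed.
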